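(* In $TTR$, let $A$ be an atomic formula. If $\Gamma\vdash_{TTR}t:A$, then $t$ does not begin with $\lambda$. In other words, if $\Gamma\vdash_{TTR}\lambda xu:B$, then $B$ is an arrow type.
   Context: $TTR$ types: over a second-order language with first-order variables, function symbols, $n$-ary predicate variables and symbols, and a fixed system $\mathbf E$ of equations; atomic formulas $\perp$ and $X(t_1,\dots,t_n)$; constructors $\to$, $\forall x$, $\forall X$, and $\mu Cx_1\dots x_nA\langle t_1,\dots,t_n\rangle$ for $C$ an $n$-ary predicate symbol occurring and positive in $A$. Subtyping $\subseteq$ is generated by: reflexivity; $A\subseteq A',B\subseteq B'\Rightarrow A'\to B\subseteq A\to B'$; $A[G/v]\subseteq B\Rightarrow\forall vA\subseteq B$; $A\subseteq B\Rightarrow A\subseteq\forall vB$ ($v$ not free in $A$); $A\subseteq B[v/y]\Rightarrow A\subseteq B[w/y]$ for $v=w$ an instance of an equation of $\mathbf E$; transitivity; $D[\mu C\bar xD\langle\bar z\rangle/C(\bar z)][\bar t/\bar x]\subseteq\mu C\bar xD\langle\bar t\rangle$ and its converse; $D[E/C(\bar x)]\subseteq E\Rightarrow\mu C\bar xD\langle\bar t\rangle\subseteq E[\bar t/\bar x]$. Typing $\Gamma\vdash_{TTR}t:A$: variable axiom; $\to$-intro/elim; $\forall$-intro (variable not free in context) and elimination for first- and second-order variables; equational rule for instances of $\mathbf E$; subsumption along $\subseteq$; rule (Y): from $\Gamma\vdash t:\forall\bar x[C(\bar x)\to E]\to\forall\bar x[D\to E]$ infer $\Gamma\vdash(Y)t:\forall\bar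 x[\mu C\bar xD\langle\bar x\rangle\to E]$ ($C$ not free in $E$ nor in $\Gamma$, $Y$ Turing's fixed point combinator). An arrow type is a type containing at least one $\to$. *)

From Stdlib Require Import List Arith PeanoNat.
Import ListNotations.

Inductive term : Type :=
| Var (i : nat)                      (* first-order variable, de Bruijn index *)
| Fn (f : nat) (ts : list term).

Fixpoint tsubst (s : nat -> term) (t : term) : term :=
  match t with
  | Var i => s i
  | Fn f ts => Fn f (map (tsubst s) ts)
  end.

Definition upn (n : nat) (s : nat -> term) : nat -> term :=
  fun i => if i <? n then Var i else tsubst (fun j => Var (n + j)) (s (i - n)).

Definition shiftby (n : nat) : nat -> term := fun j => Var (n + j).

Definition idvars (n : nat) : list term := map Var (seq 0 n).

(* Predicate variables are indexed by their arity n and a de Bruijn index i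
   among the n-ary predicate variables.  Predicate symbols are TCst n c. *)
Inductive ty : Type :=
| TBot
| TVar (n i : nat) (ts : list term)
| TCst (n c : nat) (ts : list term)
| TArr (A B : ty)
| TAll1 (A : ty)
| TAll2 (n : nat) (A : ty)            (* forall X A, X n-ary (binds n-ary pred index 0) *)
| TMu (n : nat) (D : ty) (ts : list term).
  (* mu C x_0..x_{n-1} D <ts> : in D, fo indices 0..n-1 are x_0..x_{n-1}
     and the n-ary predicate variable 0 is C. *)

Fixpoint fsub (s : nat -> term) (A : ty) : ty :=
  match A with
  | TBot => TBot
  | TVar n i ts => TVar n i (map (tsubst s) ts)
  | TCst n c ts => TCst n c (map (tsubst s) ts)
  | TArr A B => TArr (fsub s A) (fsub s B)
  | TAll1 A => TAll1 (fsub (upn 1 s) A)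
  | TAll2 n A => TAll2 n (fsub s A)
  | TMu n D ts => TMu n (fsub (upn n s) D) (map (tsubst s) ts)
  end.

Definition fsub1 (t : term) (A : ty) : ty :=
  fsub (fun j => match j with 0 => t | S j' => Var j' end) A.

Definition pupr (m : nat) (r : nat -> nat -> nat) : nat -> nat -> nat :=
  fun k i => if k =? m then match i with 0 => 0 | S i' => S (r k i') end
             else r k i.

Fixpoint pren (r : nat -> nat -> nat) (A : ty) : ty :=
  match A with
  | TBot => TBot
  | TVar n i ts => TVar n (r n i) ts
  | TCst n c ts => TCst n c ts
  | TArr A B => TArr (pren r A) (pren r B)
  | TAll1 A => TAll1 (pren r A)
  | TAll2 n A => TAll2 n (pren (pupr n r) A)
  | TMu n D ts => TMu n (pren (pupr n r) D) ts
  end.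

Definition pshift (m : nat) : nat -> nat -> nat :=
  fun k i => if k =? m then S i else i.

(* A predicate abstraction of arity n is a type G whose fo variables 0..n-1
   are the abstracted variables; inst n G ts = G[ts/x]. *)
Definition inst (n : nat) (G : ty) (ts : list term) : ty :=
  fsub (fun j => if j <? n then nth j ts (Var 0) else Var (j - n)) G.

(* second-order substitution: r k i is the abstraction (of arity k)
   replacing the k-ary predicate variable i *)
Definition psup_fo (m : nat) (r : nat -> nat -> ty) : nat -> nat -> ty :=
  fun k i => fsub (upn k (shiftby m)) (r k i).

Definition psup_p (m : nat) (r : nat -> nat -> ty) : nat -> nat -> ty :=
  fun k i => if k =? m then
               match i with
               | 0 => TVar m 0 (idvars m)
               | S i' => pren (pshift m) (r k i')
               end
             else pren (pshift m) (r k i).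

Fixpoint psub (r : nat -> nat -> ty) (A : ty) : ty :=
  match A with
  | TBot => TBot
  | TVar n i ts => inst n (r n i) ts
  | TCst n c ts => TCst n c ts
  | TArr A B => TArr (psub r A) (psub r B)
  | TAll1 A => TAll1 (psub (psup_fo 1 r) A)
  | TAll2 n A => TAll2 n (psub (psup_p n r) A)
  | TMu n D ts => TMu n (psub (psup_p n (psup_fo n r)) D) ts
  end.

(* A[G/X], X = the m-ary predicate variable 0, G an abstraction of arity m *)
Definition psub1 (m : nat) (G : ty) (A : ty) : ty :=
  psub (fun k i => if k =? m then
                     match i with 0 => G | S i' => TVar k i' (idvars k) end
                   else TVar k i (idvars k)) A.

Fixpoint occ (m k : nat) (A : ty) : Prop :=
  match A with
  | TBot => False
  | TVar n i _ => n = m /\ i = k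
  | TCst _ _ _ => False
  | TArr A B => occ m k A \/ occ m k B
  | TAll1 A => occ m k A
  | TAll2 n A => occ m (if n =? m then S k else k) A
  | TMu n D _ => occ m (if n =? m then S k else k) D
  end.

Fixpoint pos (m k : nat) (A : ty) : Prop :=
  match A with
  | TBot => True
  | TVar _ _ _ => True
  | TCst _ _ _ => True
  | TArr A B => neg m k A /\ pos m k B
  | TAll1 A => pos m k A
  | TAll2 n A => pos m (if n =? m then S k else k) A
  | TMu n D _ => pos m (if n =? m then S k else k) D
  end
with neg (m k : nat) (A : ty) : Prop :=
  match A with
  | TBot => True
  | TVar n i _ => ~ (n = m /\ i = k)
  | TCst _ _ _ => True
  | TArr A B => pos m k A /\ neg m k B
  | TAll1 A => neg m k A
  | TAll2 n A => neg m (if n =? m then S k else k) A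
  | TMu n D _ => neg m (if n =? m then S k else k) D
  end.

Fixpoint wf_ty (A : ty) : Prop :=
  match A with
  | TBot => True
  | TVar n _ ts => length ts = n
  | TCst n _ ts => length ts = n
  | TArr A B => wf_ty A /\ wf_ty B
  | TAll1 A => wf_ty A
  | TAll2 _ A => wf_ty A
  | TMu n D ts => length ts = n /\ wf_ty D /\ occ n 0 D /\ pos n 0 D
  end.

Definition wf_ctx (G : list ty) : Prop := Forall wf_ty G.

Fixpoint cst_occ (m c : nat) (A : ty) : Prop :=
  match A with
  | TBot => False
  | TVar _ _ _ => False
  | TCst n d _ => n = m /\ d = c
  | TArr A B => cst_occ m c A \/ cst_occ m c B
  | TAll1 A => cst_occ m c A
  | TAll2 _ A => cst_occ m c A
  | TMu _ D _ => cst_occ m c D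
  end.

Fixpoint has_arrow (A : ty) : Prop :=
  match A with
  | TBot | TVar _ _ _ | TCst _ _ _ => False
  | TArr _ _ => True
  | TAll1 A => has_arrow A
  | TAll2 _ A => has_arrow A
  | TMu _ D _ => has_arrow D
  end.

Definition is_atomic (A : ty) : Prop :=
  match A with
  | TBot | TVar _ _ _ | TCst _ _ _ => True
  | _ => False
  end.

Definition forall_n (n : nat) (A : ty) : ty := Nat.iter n TAll1 A.

(* unfolding: D[mu C x D<z>/C(z)][ts/x] *)
Definition unfold (n : nat) (D : ty) (ts : list term) : ty :=
  inst n (psub1 n (TMu n (fsub (upn n (shiftby (n + n))) D) (idvars n)) D) ts.

Definition eq_inst (E : term -> term -> Prop) (v w : term) : Prop :=
  exists s t (sg : nat -> term), E s t /\ v = tsubst sg s /\ w = tsubst sg t.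

Inductive subty (E : term -> term -> Prop) : ty -> ty -> Prop :=
| S_refl A : wf_ty A -> subty E A A
| S_arr A A' B B' :
    wf_ty (TArr A' B) -> wf_ty (TArr A B') ->
    subty E A A' -> subty E B B' -> subty E (TArr A' B) (TArr A B')
| S_all1_l A t B :
    wf_ty (TAll1 A) -> wf_ty B ->
    subty E (fsub1 t A) B -> subty E (TAll1 A) B
| S_all2_l n A G B :
    wf_ty (TAll2 n A) -> wf_ty B ->
    subty E (psub1 n G A) B -> subty E (TAll2 n A) B
| S_all1_r A B :
    wf_ty A -> wf_ty (TAll1 B) ->
    subty E (fsub (shiftby 1) A) B -> subty E A (TAll1 B)
| S_all2_r n A B :
    wf_ty A -> wf_ty (TAll2 n B) ->
    subty E (pren (pshift n) A) B -> subty E A (TAll2 n B)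
| S_eq A B v w :
    wf_ty A -> wf_ty (fsub1 w B) ->
    eq_inst E v w -> subty E A (fsub1 v B) -> subty E A (fsub1 w B)
| S_trans A B C :
    wf_ty A -> wf_ty C ->
    subty E A B -> subty E B C -> subty E A C
| S_fold n D ts :
    wf_ty (unfold n D ts) -> wf_ty (TMu n D ts) ->
    subty E (unfold n D ts) (TMu n D ts)
| S_unfold n D ts :
    wf_ty (unfold n D ts) -> wf_ty (TMu n D ts) ->
    subty E (TMu n D ts) (unfold n D ts)
| S_ind n D Ety ts :
    (* Ety is in the scope of x_0..x_{n-1}; D[Ety/C(x)] <= Ety *)
    wf_ty (TMu n D ts) -> wf_ty (inst n Ety ts) ->
    subty E (psub1 n (fsub (upn n (shiftby n)) Ety) D) Ety ->
    subty E (TMu n D ts) (inst n Ety ts).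

Inductive lterm : Type :=
| LVar (x : nat)
| LApp (t u : lterm)
| LLam (u : lterm).

(* Turing's fixed point combinator (\x y. y (x x y)) (\x y. y (x x y)) *)
Definition turing_half : lterm :=
  LLam (LLam (LApp (LVar 0) (LApp (LApp (LVar 1) (LVar 1)) (LVar 0)))).
Definition Ycomb : lterm := LApp turing_half turing_half.

Inductive typing (E : term -> term -> Prop) : list ty -> lterm -> ty -> Prop :=
| T_var G x A :
    wf_ctx G -> nth_error G x = Some A -> typing E G (LVar x) A
| T_lam G u A B :
    wf_ctx G -> wf_ty (TArr A B) ->
    typing E (A :: G) u B -> typing E G (LLam u) (TArr A B)
| T_app G t u A B :
    wf_ctx G -> wf_ty B ->
    typing E G t (TArr A B) -> typing E G u A -> typing E G (LApp t u) B
| T_all1_i G t A :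
    wf_ctx G -> wf_ty (TAll1 A) ->
    typing E (map (fsub (shiftby 1)) G) t A -> typing E G t (TAll1 A)
| T_all2_i G t n A :
    wf_ctx G -> wf_ty (TAll2 n A) ->
    typing E (map (pren (pshift n)) G) t A -> typing E G t (TAll2 n A)
| T_all1_e G t A s :
    wf_ctx G -> wf_ty (fsub1 s A) ->
    typing E G t (TAll1 A) -> typing E G t (fsub1 s A)
| T_all2_e G t n A H :
    wf_ctx G -> wf_ty (psub1 n H A) ->
    typing E G t (TAll2 n A) -> typing E G t (psub1 n H A)
| T_eq G t A v w :
    wf_ctx G -> wf_ty (fsub1 w A) ->
    eq_inst E v w -> typing E G t (fsub1 v A) -> typing E G t (fsub1 w A)
| T_sub G t A B :
    wf_ctx G -> wf_ty B ->
    typing E G t A -> subty E A B -> typing E G t B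
| T_Y G t n D Ety c :
    (* Ety and D are in the scope of x_0..x_{n-1}; c plays the role of C *)
    wf_ctx G ->
    wf_ty (forall_n n (TArr (TMu n (fsub (upn n (shiftby n)) D) (idvars n)) Ety)) ->
    ~ cst_occ n c Ety -> ~ cst_occ n c D -> Forall (fun A => ~ cst_occ n c A) G ->
    typing E G t
      (TArr (forall_n n (TArr (TCst n c (idvars n)) Ety))
            (forall_n n (TArr (psub1 n (TCst n c (idvars n)) D) Ety))) ->
    typing E G (LApp Ycomb t)
      (forall_n n (TArr (TMu n (fsub (upn n (shiftby n)) D) (idvars n)) Ety)).


(* A derivation of [LLam u : B] starts with the arrow-introduction rule, and
   every rule that may follow it (quantifier rules, equational rule,
   subsumption) keeps the type arrow-containing: substitutions never erase
   arrows, and subtyping only instantiates quantifiers on its left-hand side,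
   while the unfolding of [mu C x D] has exactly the arrows of [D]. *)

Lemma fsub_has_arrow (s : nat -> term) (A : ty) :
  has_arrow (fsub s A) <-> has_arrow A.
Proof. revert s; induction A; intros s; simpl; auto; tauto. Qed.

Lemma pren_has_arrow (r : nat -> nat -> nat) (A : ty) :
  has_arrow (pren r A) <-> has_arrow A.
Proof. revert r; induction A; intros r; simpl; auto; tauto. Qed.

Lemma psub_has_arrow (r : nat -> nat -> ty) (A : ty) :
  has_arrow A -> has_arrow (psub r A).
Proof. revert r; induction A; intros r HA; simpl in *; auto; contradiction. Qed.

Lemma has_arrow_psup_fo (m : nat) (r : nat -> nat -> ty) (k i : nat) :
  has_arrow (psup_fo m r k i) -> has_arrow (r k i).
Proof. apply fsub_has_arrow. Qed.

(* The fresh variable [TVar m 0 _] introduced under a binder has no arrow. *)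
Lemma has_arrow_psup_p (m : nat) (r : nat -> nat -> ty) (k i : nat) :
  has_arrow (psup_p m r k i) -> exists k' i', has_arrow (r k' i').
Proof.
  unfold psup_p; destruct (Nat.eqb k m);
    [destruct i as [|i]; simpl; [contradiction|]|];
    intros H; apply pren_has_arrow in H; eauto.
Qed.

Lemma has_arrow_psub_inv (r : nat -> nat -> ty) (A : ty) :
  has_arrow (psub r A) -> has_arrow A \/ exists k i, has_arrow (r k i).
Proof.
  revert r; induction A; intros r H; simpl in *; auto.
  - right; exists n, i; exact (proj1 (fsub_has_arrow _ _) H).
  - destruct (IHA _ H) as [HA | [k [i Hr]]]; auto.
    right; exists k, i; exact (has_arrow_psup_fo _ _ _ _ Hr).
  - destruct (IHA _ H) as [HA | [k [i Hr]]]; auto.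
    right; exact (has_arrow_psup_p _ _ _ _ Hr).
  - destruct (IHA _ H) as [HA | [k [i Hr]]]; auto.
    destruct (has_arrow_psup_p _ _ _ _ Hr) as [k' [i' Hr']].
    right; exists k', i'; exact (has_arrow_psup_fo _ _ _ _ Hr').
Qed.

Lemma has_arrow_unfold (n : nat) (D : ty) (ts : list term) :
  has_arrow (unfold n D ts) <-> has_arrow D.
Proof.
  unfold unfold, inst, psub1; rewrite fsub_has_arrow; split.
  - intros H; destruct (has_arrow_psub_inv _ _ H) as [HD | [k [i Hr]]]; auto.
    destruct (Nat.eqb k n); [destruct i|]; simpl in Hr; try contradiction.
    exact (proj1 (fsub_has_arrow _ _) Hr).
  - apply psub_has_arrow.
Qed.

Lemma subty_has_arrow (E : term -> term -> Prop) (A B : ty) :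
  subty E A B -> has_arrow A -> has_arrow B.
Proof.
  induction 1 as [| | | | | | | | n D ts | n D ts |];
    intros HA; simpl in *; auto.
  - apply IHsubty, fsub_has_arrow, HA.
  - apply IHsubty, psub_has_arrow, HA.
  - apply IHsubty, fsub_has_arrow, HA.
  - apply IHsubty, pren_has_arrow, HA.
  - unfold fsub1 in *; apply fsub_has_arrow.
    exact (proj1 (fsub_has_arrow _ _) (IHsubty HA)).
  - apply (has_arrow_unfold n D ts), HA.
  - apply (has_arrow_unfold n D ts), HA.
  - apply fsub_has_arrow, IHsubty, psub_has_arrow, HA.
Qed.

Lemma typing_lam_has_arrow (E : term -> term -> Prop) (G : list ty) (u : lterm)
    (B : ty) :
  typing E G (LLam u) B -> has_arrow B.
Proof.
  remember (LLam u) as t eqn:Ht; intros HB.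
  induction HB; try discriminate; simpl; auto.
  - apply fsub_has_arrow, IHHB, Ht.
  - apply psub_has_arrow, IHHB, Ht.
  - unfold fsub1 in *; apply fsub_has_arrow.
    exact (proj1 (fsub_has_arrow _ _) (IHHB Ht)).
  - exact (subty_has_arrow _ _ _ H1 (IHHB Ht)).
Qed.

Lemma atomic_has_no_arrow (A : ty) : is_atomic A -> ~ has_arrow A.
Proof. destruct A; simpl; tauto. Qed.

Theorem corollary4p2 (E : term -> term -> Prop) :
  (forall (G : list ty) (t : lterm) (A : ty),
      is_atomic A -> typing E G t A -> forall u, t <> LLam u) /\
  (forall (G : list ty) (u : lterm) (B : ty),
      typing E G (LLam u) B -> has_arrow B).
Proof.
  split.
  - intros G t A HA Ht u ->.
    exact (atomic_has_no_arrow A HA (typing_lam_has_arrow E G u A Ht)).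
  - apply typing_lam_has_arrow.
Qed.
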